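(* Let $k$ be an algebraically closed field, let $n\ge 1$ and $1\le g\le n$. Let $K$ be the quiver with vertices $0,1,\dots,n$ and arrows $\beta_x: x\to x+1$ for $0\le x\le g-1$ and $\alpha_x: x+1\to x$ for $g\le x\le n$, where vertex indices are read modulo $n+1$ (so $\alpha_n:0\to n$). For integers $p\le q$ let $V_{(p,q)}\in\operatorname{rep}K$ be the representation defined in the context, and for $V\in\operatorname{rep}K$ let $\overline V\in\operatorname{rep}K$ be the representation defined in the context (dualize, then relabel vertices by the permutation $G$). Let $p,q\in\mathbb Z$ with $p\le q$, and let $p',q'\in\mathbb Z$ satisfy $p'\equiv Gq \pmod{n+1}$, $q'\equiv Gp\pmod{n+1}$ and $q'-p'=q-p$. Then there is an isomorphism of representations $\overline{V_{(p,q)}}\cong V_{(p',q')}$.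
   Context: Representations of $K$ are finite-dimensional: a $k$-vector space $V(x)$ at each vertex and a linear map $V(\gamma):V(x)\to V(y)$ for each arrow $\gamma:x\to y$; morphisms are families of linear maps commuting with all arrow maps; $\operatorname{rep}K$ denotes this category. Interval representations: for $0\le p\le n$ and $q\ge p$, let $E$ have basis $e_p,\dots,e_q$ and set $V_{(p,q)}(x)=\bigoplus_{p\le i\le q,\ i\equiv x \ (\mathrm{mod}\ n+1)} k e_i$. For $0\le x\le g-1$, $V_{(p,q)}(\beta_x)$ sends $e_i$ (with $i\equiv x$) to $e_{i+1}$ if $i<q$ and to $0$ if $i=q$. For $g\le x\le n$, $V_{(p,q)}(\alpha_x)$ sends $e_i$ (with $i\equiv x+1$) to $e_{i-1}$ if $i>p$ and to $0$ if $i=p$. For arbitrary $p\in\mathbb Z$ and $q\ge p$, set $V_{(p,q)}:=V_{(p_0,q+p_0-p)}$ where $p_0\in\{0,\dots,n\}$, $p_0\equiv p \pmod{n+1}$. The permutation $G$ of $\{0,\dots,n\}$: $Gx=g-x$ for $0\le x\le g$ and $Gx=n+g+1-x$ for $g+1\le x\le n$; it is extended to $\mathbb Z$ by $Gz:=G(z\bmod (n+1))$ with $z\bmod(n+1)\in\{0,\dots,n\}$. For every arrow $\gamma:x\to y$ of $K$ there is an arrow $G\gamma: Gy\to Gx$ of $K$. For $V\in\operatorname{rep}K$ define $\overline V\in \operatorname{rep} K$ by $\overline V(x)=V(Gx)^*$ (dual space) for each vertex $x$ and, for each arrow $\gamma:x\to y$ of $K$, $\overline V(G\gamma)=V(\gamma)^*:V(y)^*\to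 V(x)^*$ (the dual map), which is a map $\overline V(Gy)\to\overline V(Gx)$. *)

From HB Require Import structures.
From mathcomp Require Import all_boot all_order all_algebra.
From mathcomp Require Import zify.
Set Implicit Arguments. Unset Strict Implicit. Unset Printing Implicit Defensive.
Import Order.TTheory GRing.Theory Num.Theory.

(* The quiver K with vertices 0..n (type 'I_n.+1) and n+1 arrows, also
   indexed by 'I_n.+1: arrow a is beta_a : a -> a+1 if a < g, and
   alpha_a : a+1 -> a if g <= a (indices mod n+1). *)
Section Quiver.
Variables (n g : nat).

Definition vsucc (x : 'I_n.+1) : 'I_n.+1 := inord (x.+1 %% n.+1).
Definition src (a : 'I_n.+1) : 'I_n.+1 := if a < g then a else vsucc a.
Definition tgt (a : 'I_n.+1) : 'I_n.+1 := if a < g then vsucc a else a.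

(* The permutation G on vertices, and the induced map on arrows
   (G beta_a = beta_(g-1-a), G alpha_a = alpha_(n+g-a)). *)
Definition Gnat (x : nat) : nat := if x <= g then g - x else n + g + 1 - x.
Definition Gv (x : 'I_n.+1) : 'I_n.+1 := inord (Gnat x).
Definition Ga (a : 'I_n.+1) : 'I_n.+1 :=
  inord (if (a < g)%N then g - 1 - a else n + g - a).

Lemma inordE (m : nat) : nat_of_ord (@inord n m) = if m <= n then m else 0.
Proof.
case: (leqP m n) => h; first by rewrite inordK.
by rewrite /inord /insubd insubF //; apply/negbTE; rewrite -leqNgt.
Qed.

Lemma vsuccE (x : 'I_n.+1) : nat_of_ord (vsucc x) = if nat_of_ord x == n then 0 else x.+1.
Proof.
rewrite /vsucc inordE; have := ltn_ord x.
case: eqP => hx hlt.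
  by rewrite hx modnn.
rewrite modn_small; last by lia.
by rewrite ifT //; lia.
Qed.

Ltac crunch :=
  repeat (rewrite ?(fun_if (@nat_of_ord n.+1)) ?vsuccE ?inordE);
  repeat match goal with |- context [if ?c then _ else _] =>
    lazymatch c with
    | context [if _ then _ else _] => fail
    | _ => case: (boolP c) => ? /=
    end end;
  lia.

Lemma tgt_Ga (hg : g <= n) (a : 'I_n.+1) : tgt (Ga a) = Gv (src a).
Proof.
apply: ord_inj; have := ltn_ord a => ha.
rewrite /tgt /src /Ga /Gv /Gnat /=.
crunch.
Qed.

Lemma src_Ga (hg : g <= n) (a : 'I_n.+1) : src (Ga a) = Gv (tgt a).
Proof.
apply: ord_inj; have := ltn_ord a => ha.
rewrite /tgt /src /Ga /Gv /Gnat /=.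
crunch.
Qed.

End Quiver.

(* A finite-dimensional representation of K over k, in coordinates:
   V(x) = k^(rdim x) (row vectors), V(a) : k^(rdim (src a)) -> k^(rdim (tgt a))
   given by v |-> v *m rmap a. *)
Record rep (k : fieldType) (n g : nat) := Rep {
  rdim : 'I_n.+1 -> nat;
  rmap : forall a : 'I_n.+1, 'M[k]_(rdim (@src n g a), rdim (@tgt n g a))
}.

Section Reps.
Variables (k : fieldType) (n g : nat).
Local Open Scope ring_scope.

Definition rep_morph (V W : rep k n g)
  (f : forall x : 'I_n.+1, 'M[k]_(rdim V x, rdim W x)) : Prop :=
  forall a : 'I_n.+1, rmap V a *m f (@tgt n g a) = f (@src n g a) *m rmap W a.

Definition rep_iso (V W : rep k n g) : Prop :=
  exists f : forall x : 'I_n.+1, 'M[k]_(rdim V x, rdim W x),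
  exists h : forall x : 'I_n.+1, 'M[k]_(rdim W x, rdim V x),
    rep_morph f /\
    forall x : 'I_n.+1, f x *m h x = 1%:M /\ h x *m f x = 1%:M.

(* The interval representation V_(p,q) for natural p <= q: basis e_p..e_q,
   V(x) spanned by the e_i with i = x mod n+1 (in increasing order of i). *)
Definition ivl_elems (p q : nat) (x : 'I_n.+1) : seq nat :=
  [seq i <- iota p (q - p).+1 | (i %% n.+1)%N == x].

Definition ivl_dim (p q : nat) (x : 'I_n.+1) : nat := size (ivl_elems p q x).

(* beta_a : e_i |-> e_(i+1) (0 if i = q);  alpha_a : e_i |-> e_(i-1) (0 if i = p) *)
Definition ivl_map (p q : nat) (a : 'I_n.+1) :
  'M[k]_(ivl_dim p q (@src n g a), ivl_dim p q (@tgt n g a)) :=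
  \matrix_(j, j')
    (if (a < g)%N then
       (nth 0%N (ivl_elems p q (@src n g a)) j).+1
         == nth 0%N (ivl_elems p q (@tgt n g a)) j'
     else
       nth 0%N (ivl_elems p q (@src n g a)) j
         == (nth 0%N (ivl_elems p q (@tgt n g a)) j').+1)%:R.

Definition Vnat (p q : nat) : rep k n g := Rep (ivl_map p q).

Definition Vint (p q : int) : rep k n g :=
  let p0 := absz (p %% n.+1)%Z in
  Vnat p0 (absz (q - p + p0%:Z)).

(* The dual representation \overline V: \overline V(x) = V(Gx)^*, and
   \overline V(G gamma) = V(gamma)^* (the dual of v |-> v *m M is given, in
   dual bases, by the transpose).  Since G is an involution on arrows,
   \overline V(b) = V(G b)^*. *)
Definition rep_dual (hg : (g <= n)%N) (V : rep k n g) : rep k n g :=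
  @Rep k n g (fun x => rdim V (@Gv n g x))
    (fun b => castmx (f_equal (rdim V) (tgt_Ga hg b),
                      f_equal (rdim V) (src_Ga hg b)) (rmap V (@Ga n g b))^T).

End Reps.

Definition Gz (n g : nat) (z : int) : nat := Gnat n g (absz (z %% n.+1)%Z).

(* Both representations have bases indexed by integer intervals: V_(p,q) has
   e_p, ..., e_q, and its dual, relabelled by G, carries the dual vector e_i^*
   at every vertex x with i = Gx (mod n+1).  Put c := p + q' = p' + q; then
   c = q + Gq = g (mod n+1).  The reflection i |-> c - i maps [p, q] onto
   [p', q'] and, since x + Gx = g (mod n+1), it maps the indices lying over Gx
   onto those lying over x.  Dualizing turns each shift e_i |-> e_(i+-1) around,
   and the reflection turns it back, so the permutation matrices of the
   reflection form an isomorphism; their inverses are their transposes. *)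

From HB Require Import structures.
From mathcomp Require Import all_boot all_order all_algebra.
From mathcomp Require Import zify.
Import Order.TTheory GRing.Theory Num.Theory.

Set Implicit Arguments. Unset Strict Implicit. Unset Printing Implicit Defensive.

Section RelationMatrices.
Variable k : comNzRingType.
Local Open Scope ring_scope.

Definition relmx (s t : seq nat) (R : rel nat) : 'M[k]_(size s, size t) :=
  \matrix_(i, j) (R (nth 0%N s i) (nth 0%N t j))%:R.

Lemma eq_relmx (s t : seq nat) (R R' : rel nat) :
  {in s & t, R =2 R'} -> relmx s t R = relmx s t R'.
Proof. by move=> eqR; apply/matrixP => i j; rewrite !mxE eqR ?mem_nth. Qed.

Lemma trmx_relmx (s t : seq nat) (R : rel nat) :
  (relmx s t R)^T = relmx t s (fun j i => R i j).
Proof. by apply/matrixP => i j; rewrite !mxE. Qed.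

Lemma castmx_relmx (s s' t t' : seq nat) (R : rel nat)
    (e : (size s = size s') * (size t = size t')) :
  s = s' -> t = t' -> castmx e (relmx s t R) = relmx s' t' R.
Proof. by move=> es et; apply/matrixP => i j; rewrite castmxE !mxE /= es et. Qed.

Lemma relmx_id (s : seq nat) : uniq s -> relmx s s eq_op = 1%:M.
Proof. by move=> us; apply/matrixP => i j; rewrite !mxE nth_uniq. Qed.

Lemma mul_relmx_graphl (s t u : seq nat) (f : nat -> nat) (R : rel nat) :
  uniq t -> {in s, forall i, f i \in t} ->
  relmx s t (fun i j => f i == j) *m relmx t u R = relmx s u (fun i l => R (f i) l).
Proof.
move=> ut ft; apply/matrixP => i l; rewrite !mxE.
have fi_t := ft _ (mem_nth 0%N (ltn_ord i)).
rewrite (bigD1 (Ordinal (etrans (index_mem _ _) fi_t))) //=.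
rewrite !mxE nth_index // eqxx mul1r big1 ?addr0 // => j neq_j.
rewrite !mxE; case: eqP => [fij | _]; last by rewrite mul0r.
by case/eqP: neq_j; apply: ord_inj; rewrite /= fij index_uniq.
Qed.

Lemma mul_relmx_graphr (s t u : seq nat) (h : nat -> nat) (R : rel nat) :
  uniq t -> {in u, forall l, h l \in t} ->
  relmx s t R *m relmx t u (fun j l => j == h l) = relmx s u (fun i l => R i (h l)).
Proof.
move=> ut ht; apply: (@trmx_inj _ (size s) (size u)); rewrite trmx_mul !trmx_relmx.
rewrite (eq_relmx (R' := fun l j => h l == j)); last by move=> l j _ _; rewrite eq_sym.
exact: mul_relmx_graphl.
Qed.

End RelationMatrices.

Section IntervalElements.
Variable n : nat.

Lemma ivl_elems_uniq (p q : nat) (x : 'I_n.+1) : uniq (ivl_elems p q x).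
Proof. exact: filter_uniq (iota_uniq _ _). Qed.

Lemma mem_ivl_elems (p q : nat) (x : 'I_n.+1) (i : nat) : p <= q ->
  (i \in ivl_elems p q x) = (p <= i <= q) && (i %% n.+1 == x).
Proof.
move=> le_pq; rewrite mem_filter mem_iota andbC; congr (_ && _).
by apply/idP/idP => /andP[? ?]; apply/andP; split; lia.
Qed.

Lemma ivl_elems_reflect (p q p' q' : nat) (x y : 'I_n.+1) (i : nat) :
  p <= q -> p + q' = p' + q -> (x + y) %% n.+1 = (p + q') %% n.+1 ->
  i \in ivl_elems p q y -> p + q' - i \in ivl_elems p' q' x.
Proof.
move=> le_pq sum_pq xy_mod; have le_pq' : p' <= q' by lia.
rewrite !mem_ivl_elems //.
case/andP=> /andP[le_pi le_iq] /eqP i_mod; apply/andP; split; first by lia.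
have: p + q' - i + y = x + y %[mod n.+1].
  by rewrite xy_mod -i_mod modnDmr subnK //; lia.
by move/eqP; rewrite eqn_modDr (modn_small (ltn_ord x)) => /eqP ->.
Qed.

End IntervalElements.

Section Quiver.
Variables (n g : nat).
Hypothesis le_gn : g <= n.

Lemma Gnat_addn_mod (x : nat) : x < n.+1 -> (x + Gnat n g x) %% n.+1 = g.
Proof.
move=> lt_xn; rewrite /Gnat; case: (leqP x g) => [le_xg | lt_gx].
  by rewrite subnKC // modn_small.
by rewrite (_ : _ + _ = g + n.+1); [rewrite modnDr modn_small | lia].
Qed.

Lemma Gv_addn_mod (x : 'I_n.+1) : (x + Gv g x) %% n.+1 = g.
Proof.
have lt_xn := ltn_ord x; rewrite /Gv inordK ?Gnat_addn_mod //.
by rewrite /Gnat; case: (leqP x g); lia.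
Qed.

Definition arrow_rel (a : 'I_n.+1) : rel nat :=
  fun i j => if a < g then i.+1 == j else i == j.+1.

Lemma Ga_lt (a : 'I_n.+1) : 0 < g -> (Ga g a < g) = (a < g).
Proof.
move=> g_gt0; have lt_an := ltn_ord a.
by rewrite /Ga inordK; case: (ltnP a g) => /= ?; lia.
Qed.

Lemma arrow_rel_Ga (a : 'I_n.+1) : 0 < g -> arrow_rel (Ga g a) = arrow_rel a.
Proof. by move=> g_gt0; rewrite /arrow_rel Ga_lt. Qed.

Variable k : fieldType.

Lemma ivl_mapE (p q : nat) (a : 'I_n.+1) :
  ivl_map k g p q a = relmx k (ivl_elems p q (src g a)) (ivl_elems p q (tgt g a)) (arrow_rel a).
Proof. by []. Qed.

Lemma rmap_dual_Vnat (p q : nat) (a : 'I_n.+1) : 0 < g ->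
  rmap (rep_dual le_gn (Vnat k n g p q)) a =
  relmx k (ivl_elems p q (Gv g (src g a))) (ivl_elems p q (Gv g (tgt g a)))
    (fun i j => arrow_rel a j i).
Proof.
move=> g_gt0; rewrite /= ivl_mapE trmx_relmx arrow_rel_Ga //.
by apply: castmx_relmx; rewrite ?tgt_Ga ?src_Ga.
Qed.

End Quiver.

Section DualInterval.
Variables (k : fieldType) (n g : nat) (p q p' q' : nat).
Hypotheses (g_gt0 : 0 < g) (le_gn : g <= n) (le_pq : p <= q).
Hypotheses (sum_pq : p + q' = p' + q) (c_mod : (p + q') %% n.+1 = g).

Let c := p + q'.
Let A (x : 'I_n.+1) := ivl_elems p q (Gv g x).
Let B (x : 'I_n.+1) := ivl_elems p' q' x.

Lemma reflect_memA (x : 'I_n.+1) (i : nat) : i \in A x -> c - i \in B x.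
Proof. by apply: ivl_elems_reflect; rewrite // Gv_addn_mod. Qed.

Lemma reflect_memB (x : 'I_n.+1) (j : nat) : j \in B x -> c - j \in A x.
Proof.
rewrite /c sum_pq => j_B; apply: ivl_elems_reflect j_B; try lia.
by rewrite -sum_pq c_mod addnC Gv_addn_mod.
Qed.

Lemma memA_le (x : 'I_n.+1) (i : nat) : i \in A x -> i <= c.
Proof. by rewrite mem_ivl_elems // => /andP[/andP[_ ?] _]; lia. Qed.

Lemma memB_le (x : 'I_n.+1) (j : nat) : j \in B x -> j <= c.
Proof. by rewrite mem_ivl_elems; [move=> /andP[/andP[_ ?] _] | ]; lia. Qed.

Local Open Scope ring_scope.

Definition reflection_mx (x : 'I_n.+1) : 'M[k]_(size (A x), size (B x)) :=
  relmx k (A x) (B x) (fun i j => (c - i)%N == j).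

Lemma trmx_reflection_mx (x : 'I_n.+1) :
  (reflection_mx x)^T = relmx k (B x) (A x) (fun j i => (c - j)%N == i).
Proof.
rewrite trmx_relmx; apply: eq_relmx => j i /memB_le ? /memA_le ?.
by apply/eqP/eqP; lia.
Qed.

Lemma reflection_mxK (x : 'I_n.+1) : reflection_mx x *m (reflection_mx x)^T = 1%:M.
Proof.
rewrite trmx_reflection_mx mul_relmx_graphl; [| exact: ivl_elems_uniq | exact: reflect_memA].
apply: etrans (relmx_id _ (ivl_elems_uniq _ _ _)).
by apply: eq_relmx => i i' /memA_le ? _; apply/eqP/eqP; lia.
Qed.

Lemma reflection_mxVK (x : 'I_n.+1) : (reflection_mx x)^T *m reflection_mx x = 1%:M.
Proof.
rewrite trmx_reflection_mx mul_relmx_graphl; [| exact: ivl_elems_uniq | exact: reflect_memB].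
apply: etrans (relmx_id _ (ivl_elems_uniq _ _ _)).
by apply: eq_relmx => j j' /memB_le ? _; apply/eqP/eqP; lia.
Qed.

Lemma reflection_mx_morph :
  @rep_morph _ _ _ (rep_dual le_gn (Vnat k n g p q)) (Vnat k n g p' q') reflection_mx.
Proof.
move=> a; rewrite rmap_dual_Vnat //= ivl_mapE /reflection_mx.
rewrite mul_relmx_graphl; [| exact: ivl_elems_uniq | exact: reflect_memA].
rewrite (@eq_relmx _ (A (tgt g a)) _ _ (fun i j => i == (c - j)%N)); last first.
  by move=> i j /memA_le ? /memB_le ?; apply/eqP/eqP; lia.
rewrite mul_relmx_graphr; [| exact: ivl_elems_uniq | exact: reflect_memB].
apply: eq_relmx => i j /memA_le ? /memB_le ?; rewrite /arrow_rel.
by case: ifP => _; apply/eqP/eqP; lia.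
Qed.

Lemma dual_Vnat_iso : rep_iso (rep_dual le_gn (Vnat k n g p q)) (Vnat k n g p' q').
Proof.
exists reflection_mx, (fun x => (reflection_mx x)^T); split.
  exact: reflection_mx_morph.
by move=> x; rewrite reflection_mxK reflection_mxVK.
Qed.

End DualInterval.

Section IntegerEndpoints.
Variables (n g : nat).
Hypothesis le_gn : (g <= n)%N.

Lemma absz_modz (z : int) : ((absz (z %% n.+1))%:Z = z %% n.+1)%Z.
Proof. by rewrite gez0_abs // modz_ge0. Qed.

Lemma Gz_addr_mod (z : int) : ((z + (Gz n g z)%:Z) %% n.+1 = g)%Z.
Proof.
have lt_zn : (absz (z %% n.+1)%Z < n.+1)%N.
  by rewrite -ltz_nat absz_modz ltz_pmod.
by rewrite -modzDml -(absz_modz z) -PoszD modz_nat /Gz Gnat_addn_mod.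
Qed.

End IntegerEndpoints.

Theorem mainTheorem1 (k : closedFieldType) (n g : nat)
  (hn : (1 <= n)%N) (hg1 : (1 <= g)%N) (hg : (g <= n)%N)
  (p q p' q' : int) :
  (p <= q)%R ->
  (p' = (Gz n g q)%:Z %[mod n.+1])%Z ->
  (q' = (Gz n g p)%:Z %[mod n.+1])%Z ->
  (q' - p')%R = (q - p)%R ->
  rep_iso (rep_dual hg (Vint k n g p q)) (Vint k n g p' q').
Proof.
move=> le_pq p'_mod _ len_eq.
set p0 := absz (p %% n.+1)%Z; set p0' := absz (p' %% n.+1)%Z; set L := absz (q - p).
have eL : Posz L = (q - p)%R by rewrite gez0_abs // subr_ge0.
rewrite /Vint len_eq -eL -!PoszD /= -/p0 -/p0'.
apply: dual_Vnat_iso => //; [exact: leq_addl | lia |].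
apply/eqP; rewrite -(eqz_nat (_ %% _)%N) -modz_nat !PoszD !absz_modz eL.
rewrite modzDml addrA modzDmr [(p + _)%R]addrC subrK.
by rewrite -modzDmr p'_mod modzDmr Gz_addr_mod.
Qed.
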